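(* Let $P$ be a finite point set in $\mathbb{S}^1$ containing a source $s$, with $|P|>2$, and let $\rho_{\mathrm{opt}}$ be an optimal range assignment for $P$. Then there exists a point $r\in\mathbb{S}^1$ such that $r\notin\mathrm{cov}(\rho_{\mathrm{opt}},P)$.
   Context: $\mathbb{S}^1$ is a circle with distance measured along the circle: $d(p,q)=\min(d_{\mathrm{cw}}(p,q),d_{\mathrm{ccw}}(p,q))$, where $d_{\mathrm{cw}},d_{\mathrm{ccw}}$ are clockwise and counterclockwise arc lengths. A range assignment $\rho$ gives each $p\in P$ a range $\rho(p)\ge0$, inducing a directed graph with edge $(p,q)$ iff $d(p,q)\le\rho(p)$; it is feasible if this graph contains an arborescence rooted at $s$ spanning $P$; its cost is $\sum_{p\in P}\rho(p)^\alpha$ for a fixed constant $\alpha>1$; an optimal assignment is a feasible one of minimum cost. The covered region $\mathrm{cov}(\rho,P)$ is the set of all $r\in\mathbb{S}^1$ such that there is $p\in P$ with $\rho(p)\ge d(p,r)$. *)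

From Stdlib Require Import Reals List.
Open Scope R_scope.

(* The circle S^1 of circumference L > 0 is modelled by the points x with
   0 <= x < L (arc-length coordinate). *)
Definition on_circle (L x : R) : Prop := 0 <= x < L.

Definition cdist (L p q : R) : R :=
  Rmin (Rabs (p - q)) (L - Rabs (p - q)).

Definition rpow (x alpha : R) : R := if Req_EM_T x 0 then 0 else Rpower x alpha.

Definition range_assignment (P : list R) (rho : R -> R) : Prop :=
  forall p, In p P -> 0 <= rho p.

Definition edge (L : R) (P : list R) (rho : R -> R) (p q : R) : Prop :=
  In p P /\ In q P /\ cdist L p q <= rho p.

Definition has_spanning_arborescence (L : R) (P : list R) (rho : R -> R) (s : R) : Prop :=
  exists par : R -> R,
    (forall p, In p P -> p <> s -> edge L P rho (par p) p) /\
    (forall p, In p P -> exists k : nat, Nat.iter k par p = s).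

Definition feasible (L : R) (P : list R) (s : R) (rho : R -> R) : Prop :=
  range_assignment P rho /\ has_spanning_arborescence L P rho s.

Definition cost (alpha : R) (P : list R) (rho : R -> R) : R :=
  fold_right Rplus 0 (map (fun p => rpow (rho p) alpha) P).

Definition optimal (L alpha : R) (P : list R) (s : R) (rho : R -> R) : Prop :=
  feasible L P s rho /\
  forall rho', feasible L P s rho' -> cost alpha P rho <= cost alpha P rho'.

Definition covered (L : R) (P : list R) (rho : R -> R) (r : R) : Prop :=
  exists p, In p P /\ cdist L p r <= rho p.

From Stdlib Require Import Reals List Lra Lia Wf_nat Classical ClassicalEpsilon.
Open Scope R_scope.

(* Suppose an optimal assignment covers the whole circle.  Lowering the range
   of a point p to the largest distance from p to a point of P below rho p is
   cheaper, so by optimality it disconnects some point, and some disconnected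
   point t lies at distance exactly rho p from p.  Choosing p so that as few
   points as possible get disconnected, every disconnected point has range 0
   (otherwise lowering its range instead disconnects fewer points).  If
   rho p < L/2, a point just beyond t (seen from p), close enough to t, is
   covered by some x other than p whose range then also reaches t; x can be
   neither connected (it would reconnect t) nor disconnected (its range is 0).
   If rho p = L/2, splitting the half-circle edge at the farthest other point
   is cheaper, because x ^ alpha is strictly superadditive. *)

Ltac cdist_cases :=
  unfold cdist, on_circle, Rmin, Rabs in *;
  repeat match goal with
  | |- context [Rcase_abs ?x] => destruct (Rcase_abs x)
  | H : context [Rcase_abs ?x] |- _ => destruct (Rcase_abs x)
  | |- context [Rle_dec ?x ?y] => destruct (Rle_dec x y)
  | H : context [Rle_dec ?x ?y] |- _ => destruct (Rle_dec x y)
  end; lra.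

Section Circle.
Variable L : R.
Hypothesis HL : 0 < L.

Lemma cdist_sym p q : cdist L p q = cdist L q p.
Proof. unfold cdist. rewrite Rabs_minus_sym. reflexivity. Qed.

Lemma cdist_refl p : cdist L p p = 0.
Proof. cdist_cases. Qed.

Lemma cdist_nonneg p q : on_circle L p -> on_circle L q -> 0 <= cdist L p q.
Proof. intros; cdist_cases. Qed.

Lemma cdist_pos p q : on_circle L p -> on_circle L q -> p <> q -> 0 < cdist L p q.
Proof. intros; cdist_cases. Qed.

Lemma cdist_le_half p q : on_circle L p -> on_circle L q -> cdist L p q <= L / 2.
Proof. intros; cdist_cases. Qed.

Lemma cdist_tri p q r : on_circle L p -> on_circle L q -> on_circle L r ->
  cdist L p r <= cdist L p q + cdist L q r.
Proof. intros; cdist_cases. Qed.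

Lemma cdist_antipode_split p c t : on_circle L p -> on_circle L c -> on_circle L t ->
  cdist L p c = L / 2 -> cdist L p t + cdist L t c = L / 2.
Proof. intros; cdist_cases. Qed.

Lemma cdist_extend p t e : on_circle L p -> on_circle L t -> 0 < e < L / 2 - cdist L p t ->
  exists y, on_circle L y /\ cdist L t y = e /\ cdist L p t < cdist L p y.
Proof.
  intros Hp Ht He.
  (* move t by e away from p, wrapping around at 0 / L when needed *)
  destruct (Rle_dec p t);
    [destruct (Rle_dec (t - p) (L / 2)) | destruct (Rle_dec (p - t) (L / 2))].
  - destruct (Rlt_dec (t + e) L); [exists (t + e) | exists (t + e - L)]; cdist_cases.
  - exists (t - e); cdist_cases.
  - destruct (Rle_dec 0 (t - e)); [exists (t - e) | exists (t - e + L)]; cdist_cases.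
  - exists (t + e); cdist_cases.
Qed.

End Circle.

Lemma rpow_nonneg x a : 0 <= rpow x a.
Proof.
  unfold rpow. destruct (Req_EM_T x 0); [lra|].
  left; apply exp_pos.
Qed.

Lemma rpow_lt_compat x y a : 0 < a -> 0 <= x < y -> rpow x a < rpow y a.
Proof.
  intros Ha Hxy. unfold rpow.
  destruct (Req_EM_T x 0), (Req_EM_T y 0); try lra.
  - apply exp_pos.
  - apply Rlt_Rpower_l; lra.
Qed.

Lemma rpow_Rmax x y a : rpow (Rmax x y) a <= rpow x a + rpow y a.
Proof.
  pose proof (rpow_nonneg x a). pose proof (rpow_nonneg y a).
  unfold Rmax. destruct (Rle_dec x y); lra.
Qed.

Lemma rpow_superadditive x y a : 0 < x -> 0 < y -> 1 < a ->
  rpow x a + rpow y a < rpow (x + y) a.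
Proof.
  intros Hx Hy Ha. unfold rpow.
  destruct (Req_EM_T x 0), (Req_EM_T y 0), (Req_EM_T (x + y) 0); try lra.
  replace a with (1 + (a - 1)) by ring.
  rewrite !Rpower_plus, !Rpower_1 by lra.
  assert (Rpower x (a - 1) < Rpower (x + y) (a - 1)) by (apply Rlt_Rpower_l; lra).
  assert (Rpower y (a - 1) < Rpower (x + y) (a - 1)) by (apply Rlt_Rpower_l; lra).
  nra.
Qed.

Definition upd (rho : R -> R) (p r : R) : R -> R :=
  fun x => if Req_EM_T x p then r else rho x.

Lemma upd_eq rho p r : upd rho p r p = r.
Proof. unfold upd. destruct (Req_EM_T p p); congruence. Qed.

Lemma upd_neq rho p r x : x <> p -> upd rho p r x = rho x.
Proof. unfold upd. destruct (Req_EM_T x p); congruence. Qed.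

Lemma cost_upd_notin alpha l rho p r : ~ In p l -> cost alpha l (upd rho p r) = cost alpha l rho.
Proof.
  induction l as [|a l IH]; intros Hp; [reflexivity|].
  assert (Hcons : forall f, cost alpha (a :: l) f = rpow (f a) alpha + cost alpha l f)
    by reflexivity.
  rewrite !Hcons, IH, upd_neq; auto.
  - intros ->. apply Hp. left; reflexivity.
  - intros Hl. apply Hp. right; exact Hl.
Qed.

Lemma cost_upd alpha l rho p r : NoDup l -> In p l ->
  cost alpha l (upd rho p r) = cost alpha l rho - rpow (rho p) alpha + rpow r alpha.
Proof.
  induction 1 as [|a l Ha Hnd IH]; intros Hp; [destruct Hp|].
  assert (Hcons : forall f, cost alpha (a :: l) f = rpow (f a) alpha + cost alpha l f)
    by reflexivity.
  rewrite !Hcons. destruct Hp as [<-|Hp].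
  - rewrite cost_upd_notin, upd_eq by exact Ha. ring.
  - rewrite IH, upd_neq by (auto; intros ->; contradiction). ring.
Qed.

Lemma exists_least (Q : nat -> Prop) : (exists n, Q n) ->
  exists n, Q n /\ forall k, Q k -> (n <= k)%nat.
Proof.
  intros HQ.
  destruct (dec_inh_nat_subset_has_unique_least_element Q (fun n => classic (Q n)) HQ)
    as (n & [Hn Hleast] & _).
  exists n. split; assumption.
Qed.

Lemma incl_length_lt {A} (eq_dec : forall x y : A, {x = y} + {x <> y}) (l l' : list A) u :
  NoDup l -> incl l l' -> In u l' -> ~ In u l -> (length l < length l')%nat.
Proof.
  intros Hnd Hincl Hu Hnu.
  apply Nat.le_lt_trans with (length (remove eq_dec u l')); [|apply remove_length_lt; exact Hu].
  apply NoDup_incl_length; [exact Hnd|].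
  intros x Hx. apply in_in_remove; [intros ->; contradiction | auto].
Qed.

Lemma exists_other_point {A} (l : list A) a b : NoDup l -> (2 < length l)%nat ->
  exists t, In t l /\ t <> a /\ t <> b.
Proof.
  intros Hnd Hlen. apply NNPP. intros Hnone.
  assert (Hincl : incl l (a :: b :: nil)).
  { intros x Hx.
    destruct (classic (x = a)) as [->|Ha]; [left; reflexivity|].
    destruct (classic (x = b)) as [->|Hb]; [right; left; reflexivity|].
    exfalso; eauto. }
  pose proof (NoDup_incl_length Hnd Hincl). simpl in *. lia.
Qed.

Lemma exists_argmax {A} (f : A -> R) (l : list A) : l <> nil ->
  exists t, In t l /\ forall q, In q l -> f q <= f t.
Proof.
  induction l as [|a l IH]; intros Hne; [congruence|].
  destruct l as [|b l].
  - exists a. split; [left; reflexivity|]. intros q [<-|[]]; lra.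
  - destruct IH as (t & Ht & Hmax); [discriminate|].
    destruct (Rle_dec (f a) (f t)).
    + exists t. split; [right; exact Ht|]. intros q [<-|Hq]; auto.
    + exists a. split; [left; reflexivity|]. intros q [<-|Hq]; [lra|].
      specialize (Hmax q Hq). lra.
Qed.

Lemma exists_max_below {A} (f : A -> R) (l : list A) b : 0 < b ->
  exists m, 0 <= m < b /\ forall q, In q l -> f q < b -> f q <= m.
Proof.
  intros Hb. induction l as [|a l IH].
  - exists 0. split; [lra|]. intros q [].
  - destruct IH as (m & Hm & Hbelow).
    destruct (Rlt_dec (f a) b) as [Ha|Ha].
    + exists (Rmax m (f a)). split.
      * pose proof (Rmax_l m (f a)). split; [lra|]. apply Rmax_lub_lt; lra.
      * intros q [<-|Hq] Hqb; [apply Rmax_r|].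
        eapply Rle_trans; [apply Hbelow; auto | apply Rmax_l].
    + exists m. split; [exact Hm|]. intros q [<-|Hq] Hqb; [contradiction | auto].
Qed.

Lemma uniform_margin {A} (f g : A -> R) (l : list A) :
  exists d, 0 < d /\ forall x, In x l -> f x < g x -> d < g x - f x.
Proof.
  induction l as [|a l IH].
  - exists 1. split; [lra|]. intros x [].
  - destruct IH as (d & Hd & Hmargin).
    destruct (Rlt_dec (f a) (g a)) as [Ha|Ha].
    + exists (Rmin d ((g a - f a) / 2)).
      pose proof (Rmin_l d ((g a - f a) / 2)). pose proof (Rmin_r d ((g a - f a) / 2)).
      split; [apply Rmin_glb_lt; lra|].
      intros x [<-|Hx] Hfg; [lra|]. specialize (Hmargin x Hx Hfg). lra.
    + exists d. split; [exact Hd|]. intros x [<-|Hx] Hfg; [contradiction | auto].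
Qed.

Section Broadcast.
Variables (L : R) (P : list R) (s : R).
Hypothesis HL : 0 < L.
Hypothesis Hon : forall p, In p P -> on_circle L p.
Hypothesis Hnd : NoDup P.

Inductive reach (rho : R -> R) : R -> Prop :=
  | reach_root : reach rho s
  | reach_step x y : reach rho x -> In x P -> In y P -> cdist L x y <= rho x -> reach rho y.

Inductive reach_in (rho : R -> R) : nat -> R -> Prop :=
  | reach_in_root : reach_in rho 0 s
  | reach_in_step n x y : reach_in rho n x -> In x P -> In y P -> cdist L x y <= rho x ->
      reach_in rho (S n) y.

Lemma reach_reach_in rho x : reach rho x -> exists n, reach_in rho n x.
Proof.
  induction 1 as [|x y _ [n Hn] Hx Hy Hxy]; [exists 0%nat; constructor|].
  exists (S n). econstructor; eauto.
Qed.

Lemma feasible_reach rho : feasible L P s rho -> forall x, In x P -> reach rho x.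
Proof.
  intros [_ (par & Hedge & Hroot)] x Hx. destruct (Hroot x Hx) as [k Hk].
  induction k as [|k IH] in x, Hx, Hk |- *; [simpl in Hk; subst; constructor|].
  destruct (Req_dec x s) as [->|Hxs]; [constructor|].
  rewrite Nat.iter_succ_r in Hk. destruct (Hedge x Hx Hxs) as (Hpar & _ & Hd).
  apply (reach_step _ (par x)); auto.
Qed.

Lemma reach_feasible rho : range_assignment P rho -> (forall x, In x P -> reach rho x) ->
  feasible L P s rho.
Proof.
  intros Hnn Hr. split; [exact Hnn|].
  (* parents strictly decrease the hop distance from s, so iterating them reaches s *)
  set (parent x z := In z P /\ cdist L z x <= rho z /\
         exists n, reach_in rho n z /\ forall k, reach_in rho k x -> (n < k)%nat).
  assert (Hparent : forall x, In x P -> x <> s -> exists z, parent x z).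
  { intros x Hx Hxs.
    destruct (exists_least _ (reach_reach_in rho x (Hr x Hx))) as ([|n] & Hn & Hleast).
    - inversion Hn; congruence.
    - inversion Hn as [|n' z x' Hz HzP _ Hzx]; subst.
      exists z. repeat split; auto. exists n. split; [exact Hz|].
      intros k Hk. specialize (Hleast k Hk). lia. }
  exists (fun x => epsilon (inhabits s) (parent x)). split.
  - intros p Hp Hps.
    destruct (epsilon_spec (inhabits s) (parent p) (Hparent p Hp Hps)) as (Hz & Hd & _).
    repeat split; auto.
  - intros p Hp. destruct (reach_reach_in rho p (Hr p Hp)) as [n Hn].
    revert p Hp Hn. induction n as [n IH] using lt_wf_ind. intros p Hp Hn.
    destruct (Req_dec p s) as [->|Hps]; [exists 0%nat; reflexivity|].
    destruct (epsilon_spec (inhabits s) (parent p) (Hparent p Hp Hps)) as (Hz & _ & n' & Hn' & Hlt).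
    destruct (IH n' (Hlt n Hn) _ Hz Hn') as [k Hk].
    exists (S k). rewrite Nat.iter_succ_r. exact Hk.
Qed.

Lemma reach_except rho rho' p x : (forall y, y <> p -> rho y <= rho' y) ->
  reach rho x -> reach rho' x \/ reach rho' p.
Proof.
  intros Hle Hx. induction Hx as [|x y _ IH Hx Hy Hxy]; [left; constructor|].
  destruct IH as [Hx'|Hp]; [|right; exact Hp].
  destruct (Req_dec x p) as [->|Hxp]; [right; exact Hx'|].
  left. apply (reach_step _ x); auto. specialize (Hle x Hxp). lra.
Qed.

Lemma reach_upd_self rho p r : reach rho p -> reach (upd rho p r) p.
Proof.
  intros Hp. destruct (reach_except rho (upd rho p r) p p) as [H|H]; auto.
  intros y Hy. rewrite upd_neq by exact Hy. apply Rle_refl.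
Qed.

Lemma reach_upd_cut rho p r x : reach rho x ->
  reach (upd rho p r) x \/
  exists t, In t P /\ ~ reach (upd rho p r) t /\ r < cdist L p t <= rho p.
Proof.
  intros Hx. induction Hx as [|x y _ IH Hx Hy Hxy]; [left; constructor|].
  destruct IH as [Hx'|Hcut]; [|right; exact Hcut].
  destruct (classic (reach (upd rho p r) y)) as [Hy'|Hy']; [left; exact Hy'|].
  assert (Hxp : x = p).
  { destruct (Req_dec x p) as [|Hxp]; [assumption|].
    exfalso. apply Hy', (reach_step _ x); rewrite ?upd_neq; auto. }
  subst x. right. exists y. repeat split; auto.
  apply Rnot_le_lt. intros Hle. apply Hy', (reach_step _ p); rewrite ?upd_eq; auto.
Qed.

Lemma reach_upd_transfer rho p r u ru x : r <= rho p ->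
  ~ reach (upd rho p r) u -> reach (upd rho p r) x -> reach (upd rho u ru) x.
Proof.
  intros Hr Hu Hx. induction Hx as [|x y Hx' IH Hx Hy Hxy]; [constructor|].
  assert (Hxu : x <> u) by (intros ->; contradiction).
  apply (reach_step _ x); auto. rewrite upd_neq by exact Hxu.
  unfold upd in Hxy. destruct (Req_EM_T x p) as [->|]; lra.
Qed.

Definition disconnected (rho : R -> R) : list R :=
  filter (fun x => if excluded_middle_informative (reach rho x) then false else true) P.

Lemma In_disconnected rho x : In x (disconnected rho) <-> In x P /\ ~ reach rho x.
Proof.
  unfold disconnected. rewrite filter_In.
  destruct (excluded_middle_informative (reach rho x)); intuition congruence.
Qed.

Lemma uncovered_beyond_cut rho p r t : In p P -> In t P ->
  ~ reach (upd rho p r) t -> cdist L p t = rho p -> rho p < L / 2 ->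
  (forall u, In u P -> ~ reach (upd rho p r) u -> rho u = 0) ->
  exists y, on_circle L y /\ ~ covered L P rho y.
Proof.
  intros Hp Ht Hcut Hpt Hhalf Hzero.
  destruct (uniform_margin rho (fun x => cdist L x t) P) as (d & Hd & Hmargin).
  set (e := Rmin d ((L / 2 - rho p) / 2)).
  assert (He : 0 < e <= d /\ e < L / 2 - cdist L p t).
  { unfold e, Rmin. destruct (Rle_dec d ((L / 2 - rho p) / 2)); lra. }
  destruct (cdist_extend L HL p t e (Hon p Hp) (Hon t Ht)) as (y & Hy & Hty & Hpy); [lra|].
  exists y. split; [exact Hy|]. intros (x & Hx & Hxy).
  assert (Hxp : x <> p) by (intros ->; lra).
  pose proof (cdist_tri L HL x y t (Hon x Hx) Hy (Hon t Ht)).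
  pose proof (cdist_tri L HL y x t Hy (Hon x Hx) (Hon t Ht)).
  pose proof (cdist_sym L t y). pose proof (cdist_sym L x y).
  destruct (Rlt_dec (rho x) (cdist L x t)) as [Hfar|Hnear].
  - specialize (Hmargin x Hx Hfar). simpl in Hmargin. lra.
  - destruct (classic (reach (upd rho p r) x)) as [Hrx|Hrx].
    + apply Hcut. apply (reach_step _ x); auto. rewrite upd_neq by exact Hxp. lra.
    + specialize (Hzero x Hx Hrx). lra.
Qed.

(* Lowering the range of p to r removes exactly the edges of length rho p out of p. *)
Definition shrunk_range (rho : R -> R) (p r : R) : Prop :=
  0 <= r < rho p /\ forall q, In q P -> cdist L p q < rho p -> cdist L p q <= r.

Lemma exists_shrunk_range rho p : 0 < rho p -> exists r, shrunk_range rho p r.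
Proof. apply exists_max_below. Qed.

Section Feasible.
Variable rho : R -> R.
Hypothesis Hfeas : feasible L P s rho.

Lemma exists_pos_range : (2 < length P)%nat -> exists p, In p P /\ 0 < rho p.
Proof.
  intros Hlen.
  destruct (exists_other_point P s s Hnd Hlen) as (x & Hx & Hxs & _).
  pose proof (feasible_reach rho Hfeas x Hx) as Hreach. clear Hx. revert Hxs.
  induction Hreach as [|z y _ IH Hz Hy Hzy]; intros Hys; [congruence|].
  destruct (Req_dec z y) as [->|Hne]; [exact (IH Hys)|].
  exists z. split; [exact Hz|]. pose proof (cdist_pos L z y (Hon z Hz) (Hon y Hy) Hne). lra.
Qed.

Lemma disconnected_shrink_lt p r u ru : shrunk_range rho p r -> In u P ->
  ~ reach (upd rho p r) u ->
  (length (disconnected (upd rho u ru)) < length (disconnected (upd rho p r)))%nat.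
Proof.
  intros [Hr _] Hu Hcut. apply (incl_length_lt Req_EM_T) with u.
  - apply NoDup_filter, Hnd.
  - intros x. rewrite !In_disconnected. intros [Hx Hnx]. split; [exact Hx|].
    intros Hrx. apply Hnx. eapply reach_upd_transfer; eauto. lra.
  - apply In_disconnected. auto.
  - rewrite In_disconnected. intros [_ Hnu].
    apply Hnu, reach_upd_self, (feasible_reach rho Hfeas), Hu.
Qed.

Lemma exists_terminal_shrink : (2 < length P)%nat ->
  exists p r, In p P /\ shrunk_range rho p r /\
    forall u, In u P -> ~ reach (upd rho p r) u -> rho u = 0.
Proof.
  intros Hlen. destruct (exists_pos_range Hlen) as (p0 & Hp0 & Hpos0).
  destruct (exists_shrunk_range rho p0 Hpos0) as [r0 Hr0].
  assert (Hstart : exists n p r, In p P /\ shrunk_range rho p r /\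
                                 length (disconnected (upd rho p r)) = n) by eauto 6.
  destruct (exists_least _ Hstart) as (n & (p & r & Hp & Hr & <-) & Hleast).
  exists p, r. split; [exact Hp|split; [exact Hr|]]. intros u Hu Hcut.
  apply Rle_antisym; [|apply (proj1 Hfeas), Hu]. apply Rnot_lt_le. intros Hpos.
  destruct (exists_shrunk_range rho u Hpos) as [ru Hru].
  assert (Hle := Hleast _ (ex_intro _ u (ex_intro _ ru (conj Hu (conj Hru eq_refl))))).
  pose proof (disconnected_shrink_lt p r u ru Hr Hu Hcut). lia.
Qed.

End Feasible.

Section Optimal.
Variables (alpha : R) (rho : R -> R).
Hypothesis Halpha : 1 < alpha.
Hypothesis Hopt : optimal L alpha P s rho.
Let Hfeas : feasible L P s rho := proj1 Hopt.

Lemma shrink_disconnects p r : In p P -> 0 <= r < rho p ->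
  exists x, In x P /\ ~ reach (upd rho p r) x.
Proof.
  intros Hp Hr. apply NNPP. intros Hall.
  assert (Hfeas' : feasible L P s (upd rho p r)).
  { apply reach_feasible.
    - intros x Hx. unfold upd. destruct (Req_EM_T x p); [lra | apply (proj1 Hfeas), Hx].
    - intros x Hx. apply NNPP. eauto. }
  pose proof (proj2 Hopt _ Hfeas') as Hcost. rewrite cost_upd in Hcost by auto.
  pose proof (rpow_lt_compat r (rho p) alpha ltac:(lra) Hr). lra.
Qed.

Lemma shrunk_range_cut p r : In p P -> shrunk_range rho p r ->
  exists t, In t P /\ ~ reach (upd rho p r) t /\ cdist L p t = rho p.
Proof.
  intros Hp [Hr Hgap]. destruct (shrink_disconnects p r Hp Hr) as (x & Hx & Hcut).
  destruct (reach_upd_cut rho p r x (feasible_reach rho Hfeas x Hx))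
    as [Hreach | (t & Ht & Hcut_t & Hlo & [Hlt|Heq])]; [contradiction | |].
  - specialize (Hgap t Ht Hlt). lra.
  - exists t. auto.
Qed.

Lemma split_feasible p c t : In p P -> In c P -> In t P -> t <> p ->
  (forall q, In q P -> q <> c -> cdist L p q <= cdist L p t) ->
  feasible L P s (upd (upd rho t (Rmax (rho t) (cdist L t c))) p (cdist L p t)).
Proof.
  intros Hp Hc Ht Htp Hfar.
  set (rho' := upd (upd rho t (Rmax (rho t) (cdist L t c))) p (cdist L p t)).
  assert (Hr'p : rho' p = cdist L p t) by apply upd_eq.
  assert (Hr't : rho' t = Rmax (rho t) (cdist L t c))
    by (unfold rho'; rewrite upd_neq, upd_eq; auto).
  assert (Hreach_p : reach rho' p).
  { destruct (reach_except rho rho' p p) as [H|H]; auto.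
    2: apply (feasible_reach rho Hfeas), Hp.
    intros y Hy. unfold rho'. rewrite upd_neq by exact Hy. unfold upd.
    destruct (Req_EM_T y t) as [->|]; [apply Rmax_l | apply Rle_refl]. }
  assert (Hreach_t : reach rho' t) by (apply (reach_step _ p); auto; lra).
  apply reach_feasible.
  - intros x Hx. unfold rho', upd.
    destruct (Req_EM_T x p); [apply cdist_nonneg; auto|].
    destruct (Req_EM_T x t) as [->|]; [|apply (proj1 Hfeas), Hx].
    pose proof (Rmax_l (rho t) (cdist L t c)). pose proof (proj1 Hfeas t Ht). lra.
  - intros q Hq. destruct (Req_dec q c) as [->|Hqc].
    + apply (reach_step _ t); auto. rewrite Hr't. apply Rmax_r.
    + apply (reach_step _ p); auto. rewrite Hr'p. auto.
Qed.

Lemma optimal_range_neq_half p c : (2 < length P)%nat -> In p P -> In c P ->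
  cdist L p c = L / 2 -> rho p <> L / 2.
Proof.
  intros Hlen Hp Hc Hpc Hrp.
  destruct (exists_other_point P p c Hnd Hlen) as (t0 & Ht0 & Ht0p & Ht0c).
  destruct (exists_argmax (cdist L p) (remove Req_EM_T c P)) as (t & Ht & Hmax).
  { intros Hnil. pose proof (in_in_remove Req_EM_T _ Ht0c Ht0) as H.
    rewrite Hnil in H. exact H. }
  apply in_remove in Ht as [Ht Htc].
  assert (Hfar : forall q, In q P -> q <> c -> cdist L p q <= cdist L p t)
    by (intros q Hq Hqc; apply Hmax, in_in_remove; auto).
  assert (Htp : t <> p).
  { intros ->. specialize (Hfar t0 Ht0 Ht0c). rewrite (cdist_refl L HL) in Hfar.
    pose proof (cdist_pos L p t0 (Hon p Hp) (Hon t0 Ht0) (not_eq_sym Ht0p)). lra. }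
  pose proof (cdist_pos L p t (Hon p Hp) (Hon t Ht) (not_eq_sym Htp)).
  pose proof (cdist_pos L t c (Hon t Ht) (Hon c Hc) Htc).
  pose proof (cdist_antipode_split L HL p c t (Hon p Hp) (Hon c Hc) (Hon t Ht) Hpc) as Hsplit.
  pose proof (proj2 Hopt _ (split_feasible p c t Hp Hc Ht Htp Hfar)) as Hcost.
  rewrite !cost_upd, upd_neq in Hcost by auto.
  pose proof (rpow_Rmax (rho t) (cdist L t c) alpha).
  pose proof (rpow_superadditive (cdist L p t) (cdist L t c) alpha).
  rewrite Hsplit, <- Hrp in *. lra.
Qed.

End Optimal.
End Broadcast.

Theorem lemma3 (L alpha : R) (P : list R) (s : R) (rho_opt : R -> R) :
  0 < L -> 1 < alpha ->
  NoDup P -> (forall p, In p P -> on_circle L p) ->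
  In s P -> (2 < length P)%nat ->
  optimal L alpha P s rho_opt ->
  exists r, on_circle L r /\ ~ covered L P rho_opt r.
Proof.
  intros HL Halpha Hnd Hon _ Hlen Hopt.
  destruct (exists_terminal_shrink L P s Hon Hnd rho_opt (proj1 Hopt) Hlen)
    as (p & r & Hp & Hr & Hzero).
  destruct (shrunk_range_cut L P s Hnd alpha rho_opt Halpha Hopt p r Hp Hr)
    as (t & Ht & Hcut & Hpt).
  assert (Hhalf : rho_opt p < L / 2).
  { pose proof (cdist_le_half L p t (Hon p Hp) (Hon t Ht)).
    pose proof (optimal_range_neq_half L P s HL Hon Hnd alpha rho_opt Halpha Hopt p t Hlen Hp Ht).
    destruct (Req_dec (rho_opt p) (L / 2)); [exfalso|]; lra. }
  exact (uncovered_beyond_cut L P s HL Hon rho_opt p r t Hp Ht Hcut Hpt Hhalf Hzero).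
Qed.
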